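(* Let $\{(\mathbf{x}^k,\mathbf{y}^k,\boldsymbol{\gamma}^k)\}$ be generated by the two-block linearized ADMM below, applied under the standing assumptions (i)–(iv) below. Then for every $k\ge0$, $$L_\beta(\mathbf{x}^k,\mathbf{y}^k,\boldsymbol{\gamma}^k)-L_\beta(\mathbf{x}^{k+1},\mathbf{y}^k,\boldsymbol{\gamma}^k)\ge C_0\|\mathbf{x}^{k+1}-\mathbf{x}^k\|^2,$$ where $C_0=\frac{L_x-L_g-\beta L_{\mathbf{A}}}{2}$ and $L_{\mathbf{A}}$ is the largest eigenvalue of $\mathbf{A}^{\rm T}\mathbf{A}$.
   Context: Problem: minimize $g(\mathbf{x},\mathbf{y})+f(\mathbf{x})+h(\mathbf{y})$ s.t. $\mathbf{A}\mathbf{x}+\mathbf{B}\mathbf{y}=\mathbf{0}$, $\mathbf{x}\in\mathbb{R}^p$, $\mathbf{y}\in\mathbb{R}^q$, $\mathbf{A}\in\mathbb{R}^{n\times p}$, $\mathbf{B}\in\mathbb{R}^{n\times q}$; $f$ possibly nonconvex nonsmooth. Standing assumptions: (i) $\nabla h$ is $L_h$-Lipschitz; (ii) $\nabla g$ is $L_g$-Lipschitz; (iii) $g+f+h$ is lower bounded on the feasible set $\{\mathbf{A}\mathbf{x}+\mathbf{B}\mathbf{y}=\mathbf{0}\}$ and coercive w.r.t. $\mathbf{y}$ over it; (iv) $\mathbf{B}$ has full column rank and $\mathrm{Im}(\mathbf{A})\subset\mathrm{Im}(\mathbf{B})$. $L_\beta(\mathbf{x},\mathbf{y},\boldsymbol{\gamma})=g(\mathbf{x},\mathbf{y})+f(\mathbf{x})+h(\mathbf{y})+\langle\boldsymbol{\gamma},\mathbf{A}\mathbf{x}+\mathbf{B}\mathbf{y}\rangle+\frac{\beta}{2}\|\mathbf{A}\mathbf{x}+\mathbf{B}\mathbf{y}\|^2$.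 Algorithm (parameters $L_x,L_y,\beta>0$): $\mathbf{x}^{k+1}\in\arg\min\bar f^k$, $\mathbf{y}^{k+1}=\arg\min\bar h^k$, $\boldsymbol{\gamma}^{k+1}=\boldsymbol{\gamma}^k+\beta(\mathbf{A}\mathbf{x}^{k+1}+\mathbf{B}\mathbf{y}^{k+1})$, where $\bar f^k(\mathbf{x})=f(\mathbf{x})+\langle\boldsymbol{\gamma}^k,\mathbf{A}\mathbf{x}\rangle+\frac{L_x}{2}\|\mathbf{x}-\mathbf{x}^k\|^2+\langle\mathbf{x}-\mathbf{x}^k,\nabla_{\mathbf{x}}g(\mathbf{x}^k,\mathbf{y}^k)+\beta\mathbf{A}^{\rm T}(\mathbf{A}\mathbf{x}^k+\mathbf{B}\mathbf{y}^k)\rangle$, $\bar h^k(\mathbf{y})=\langle\boldsymbol{\gamma}^k,\mathbf{B}\mathbf{y}\rangle+\frac{L_y}{2}\|\mathbf{y}-\mathbf{y}^k\|^2+\frac{\beta}{2}\|\mathbf{A}\mathbf{x}^{k+1}+\mathbf{B}\mathbf{y}\|^2+\langle\mathbf{y}-\mathbf{y}^k,\nabla_{\mathbf{y}}g(\mathbf{x}^{k+1},\mathbf{y}^k)+\nabla h(\mathbf{y}^k)\rangle$. *)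

From HB Require Import structures.
From mathcomp Require Import all_boot all_order all_algebra.
From mathcomp Require Import all_classical all_reals all_analysis.
Set Implicit Arguments. Unset Strict Implicit. Unset Printing Implicit Defensive.
Import Order.TTheory GRing.Theory Num.Theory.
Import numFieldNormedType.Exports.
Local Open Scope ring_scope.

Definition dotv (R : realType) (n : nat) (u v : 'cV[R]_n) : R := (u^T *m v) 0 0.

Definition enorm (R : realType) (n : nat) (v : 'cV[R]_n) : R := Num.sqrt (dotv v v).

Definition is_gradient (R : realType) (n : nat) (f : 'cV[R]_n -> R)
  (G : 'cV[R]_n -> 'cV[R]_n) : Prop :=
  forall x, differentiable f x /\ forall h, 'd f x h = dotv (G x) h.

Definition lipschitz_map (R : realType) (n m : nat) (G : 'cV[R]_n -> 'cV[R]_m)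
  (L : R) : Prop :=
  forall u v, enorm (G u - G v) <= L * enorm (u - v).

Definition largest_eigenvalue (R : realType) (n : nat) (M : 'M[R]_n) (L : R) : Prop :=
  eigenvalue M L /\ forall mu, eigenvalue M mu -> mu <= L.

Definition aug_lag (R : realType) (n p q : nat)
  (g : 'cV[R]_(p + q) -> R) (f : 'cV[R]_p -> R) (h : 'cV[R]_q -> R)
  (A : 'M[R]_(n, p)) (B : 'M[R]_(n, q)) (beta : R)
  (x : 'cV[R]_p) (y : 'cV[R]_q) (gam : 'cV[R]_n) : R :=
  g (col_mx x y) + f x + h y + dotv gam (A *m x + B *m y)
  + beta / 2 * (enorm (A *m x + B *m y)) ^+ 2.

Definition grad_x (R : realType) (p q : nat) (Gg : 'cV[R]_(p + q) -> 'cV[R]_(p + q))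
  (x : 'cV[R]_p) (y : 'cV[R]_q) : 'cV[R]_p := usubmx (Gg (col_mx x y)).
Definition grad_y (R : realType) (p q : nat) (Gg : 'cV[R]_(p + q) -> 'cV[R]_(p + q))
  (x : 'cV[R]_p) (y : 'cV[R]_q) : 'cV[R]_q := dsubmx (Gg (col_mx x y)).

Definition fbar (R : realType) (n p q : nat) (Gg : 'cV[R]_(p + q) -> 'cV[R]_(p + q))
  (f : 'cV[R]_p -> R) (A : 'M[R]_(n, p)) (B : 'M[R]_(n, q)) (beta Lx : R)
  (xk : 'cV[R]_p) (yk : 'cV[R]_q) (gk : 'cV[R]_n) (x : 'cV[R]_p) : R :=
  f x + dotv gk (A *m x) + Lx / 2 * (enorm (x - xk)) ^+ 2
  + dotv (x - xk) (grad_x Gg xk yk + beta *: (A^T *m (A *m xk + B *m yk))).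

Definition hbar (R : realType) (n p q : nat) (Gg : 'cV[R]_(p + q) -> 'cV[R]_(p + q))
  (Gh : 'cV[R]_q -> 'cV[R]_q) (A : 'M[R]_(n, p)) (B : 'M[R]_(n, q)) (beta Ly : R)
  (x1 : 'cV[R]_p) (yk : 'cV[R]_q) (gk : 'cV[R]_n) (y : 'cV[R]_q) : R :=
  dotv gk (B *m y) + Ly / 2 * (enorm (y - yk)) ^+ 2
  + beta / 2 * (enorm (A *m x1 + B *m y)) ^+ 2
  + dotv (y - yk) (grad_y Gg x1 yk + Gh yk).

From HB Require Import structures.
From mathcomp Require Import all_boot all_order all_algebra.
From mathcomp Require Import all_classical all_reals all_analysis.
From mathcomp Require Import ring lra.
Import Order.TTheory GRing.Theory Num.Theory.
Import numFieldNormedType.Exports.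
Local Open Scope ring_scope.
Set Implicit Arguments. Unset Strict Implicit. Unset Printing Implicit Defensive.

(* With d = x^{k+1} - x^k, the x-update gives fbar^k(x^{k+1}) <= fbar^k(x^k),
   which controls f and the multiplier term.  The coupling g lies below its
   linearization plus (L_g/2)||d||^2 (descent lemma), and the penalty grows by
   at most its linearization plus (beta/2)||A d||^2 <= (beta L_A/2)||d||^2.
   The last bound is the Rayleigh characterization of the largest eigenvalue
   of A^T A: a maximizer of the quadratic form on the compact unit sphere is
   an eigenvector. *)

Section InnerProduct.
Variables (R : realType) (N : nat).
Implicit Types u v w : 'cV[R]_N.

Lemma dotvE u v : dotv u v = \sum_i u i 0 * v i 0.
Proof. by rewrite /dotv mxE; apply: eq_bigr => i _; rewrite mxE. Qed.

Lemma dotvC u v : dotv u v = dotv v u.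
Proof. by rewrite !dotvE; apply: eq_bigr => i _; rewrite mulrC. Qed.

Lemma dotvDl u v w : dotv (u + v) w = dotv u w + dotv v w.
Proof. by rewrite /dotv linearD mulmxDl mxE. Qed.

Lemma dotvDr u v w : dotv w (u + v) = dotv w u + dotv w v.
Proof. by rewrite /dotv mulmxDr mxE. Qed.

Lemma dotvZl a u v : dotv (a *: u) v = a * dotv u v.
Proof. by rewrite /dotv linearZ -scalemxAl mxE. Qed.

Lemma dotvZr a u v : dotv v (a *: u) = a * dotv v u.
Proof. by rewrite dotvC dotvZl dotvC. Qed.

Lemma dotvBl u v w : dotv (u - v) w = dotv u w - dotv v w.
Proof. by rewrite dotvDl -scaleN1r dotvZl mulN1r. Qed.

Lemma dotvBr u v w : dotv w (u - v) = dotv w u - dotv w v.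
Proof. by rewrite dotvC dotvBl !(dotvC w). Qed.

Lemma dotv0r v : dotv v 0 = 0.
Proof. by rewrite /dotv mulmx0 mxE. Qed.

Lemma dotv0l v : dotv 0 v = 0.
Proof. by rewrite dotvC dotv0r. Qed.

Lemma dotvvE u : dotv u u = \sum_i u i 0 ^+ 2.
Proof. by rewrite dotvE; apply: eq_bigr => i _; rewrite expr2. Qed.

Lemma dotvv_ge0 u : 0 <= dotv u u.
Proof. by rewrite dotvvE sumr_ge0 // => i _; rewrite sqr_ge0. Qed.

Lemma dotvv_eq0 u : (dotv u u == 0) = (u == 0).
Proof.
apply/idP/eqP => [|->]; last by rewrite dotv0l.
rewrite dotvvE psumr_eq0 => [/allP u0|i _]; last exact: sqr_ge0.
apply/matrixP => i j; rewrite (ord1 j) mxE.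
by apply/eqP; rewrite -sqrf_eq0; apply: u0; rewrite mem_index_enum.
Qed.

Lemma dotv_mulmx M (A : 'M[R]_(M, N)) u (v : 'cV[R]_M) :
  dotv (A *m u) v = dotv u (A^T *m v).
Proof. by rewrite /dotv trmx_mul mulmxA. Qed.

Lemma enorm_ge0 u : 0 <= enorm u.
Proof. exact: sqrtr_ge0. Qed.

Lemma enorm0 : enorm (0 : 'cV[R]_N) = 0.
Proof. by rewrite /enorm dotv0l sqrtr0. Qed.

Lemma sqr_enorm u : enorm u ^+ 2 = dotv u u.
Proof. by rewrite sqr_sqrtr // dotvv_ge0. Qed.

Lemma enorm_eq0 u : (enorm u == 0) = (u == 0).
Proof. by rewrite -sqrf_eq0 sqr_enorm dotvv_eq0. Qed.

Lemma enormZ a u : 0 <= a -> enorm (a *: u) = a * enorm u.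
Proof.
move=> a_ge0; rewrite /enorm dotvZl dotvZr mulrA -expr2.
by rewrite sqrtrM ?sqr_ge0 // sqrtr_sqr ger0_norm.
Qed.

Lemma dotv_le_enorm u v : dotv u v <= enorm u * enorm v.
Proof.
have [/eqP|u_neq0] := eqVneq (enorm u) 0.
  by rewrite enorm_eq0 => /eqP ->; rewrite dotv0l mulr_ge0 ?enorm_ge0.
have [/eqP|v_neq0] := eqVneq (enorm v) 0.
  by rewrite enorm_eq0 => /eqP ->; rewrite dotv0r mulr_ge0 ?enorm_ge0.
have uv_gt0 : 0 < enorm u * enorm v by rewrite mulr_gt0 // lt0r ?enorm_ge0 ?andbT.
have := dotvv_ge0 (enorm v *: u - enorm u *: v).
rewrite !dotvBl !dotvBr !dotvZl !dotvZr (dotvC v u) -!sqr_enorm => sq_ge0.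
rewrite -(ler_pM2l uv_gt0); nra.
Qed.

End InnerProduct.

Lemma dotv_col_mx (R : realType) m n (a c : 'cV[R]_m) (b d : 'cV[R]_n) :
  dotv (col_mx a b) (col_mx c d) = dotv a c + dotv b d.
Proof. by rewrite /dotv tr_col_mx mul_row_col mxE. Qed.

Lemma quadratic_ge0_lincoef_eq0 (F : realFieldType) (b e : F) :
  0 <= e -> (forall t, 0 <= 2 * t * b + t ^+ 2 * e) -> b = 0.
Proof.
move=> e_ge0 /(_ (- b / (e + 1))).
have e1_gt0 : 0 < e + 1 by rewrite ltr_wpDl.
have -> : 2 * (- b / (e + 1)) * b + (- b / (e + 1)) ^+ 2 * e =
          - (b ^+ 2 * (e + 2)) / (e + 1) ^+ 2 by field; rewrite gt_eqF.
rewrite pmulr_lge0 ?invr_gt0 ?exprn_gt0 // oppr_ge0 pmulr_lle0 ?ltr_wpDl //.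
by move=> b2_le0; apply/eqP; rewrite -sqrf_eq0 eq_le b2_le0 sqr_ge0.
Qed.

Section Rayleigh.
Variables (R : realType) (p : nat).
Implicit Types (M P : 'M[R]_p) (u v w : 'cV[R]_p).

Lemma continuous_quad_form M :
  continuous (fun r : 'rV[R]_p => dotv r^T (M *m r^T)).
Proof.
have -> : (fun r : 'rV[R]_p => dotv r^T (M *m r^T)) =
          (fun r => \sum_i r 0 i * \sum_j M i j * r 0 j).
  apply/funext => r; rewrite dotvE; apply: eq_bigr => i _.
  by rewrite !mxE; congr (_ * _); apply: eq_bigr => j _; rewrite mxE.
apply: continuous_big => [|i _]; first exact: add_continuous.
move=> r; apply: continuousM; first exact: coord_continuous.
apply: continuous_big => [|j _ s]; first exact: add_continuous.
by apply: continuousM; [exact: cst_continuous | exact: coord_continuous].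
Qed.

Lemma dotv_normalize M w : w != 0 ->
  let v := (enorm w)^-1 *: w in
  dotv v v = 1 /\ dotv v (M *m v) = dotv w (M *m w) / dotv w w.
Proof.
rewrite -enorm_eq0 => w_neq0 /=.
rewrite -scalemxAr !dotvZl !dotvZr !mulrA -invfM -expr2 sqr_enorm.
by split; [rewrite mulVf // -sqr_enorm sqrf_eq0 | rewrite mulrC].
Qed.

Lemma quad_form_max M u : u != 0 ->
  exists2 v, dotv v v = 1 & forall w, dotv w (M *m w) <= dotv v (M *m v) * dotv w w.
Proof.
move=> u_neq0.
(* The sphere is taken in row vectors, where bounded_closed_compact applies. *)
pose S := [set r : 'rV[R]_p | dotv r^T r^T = 1]%classic.
have S_neq0 : (S !=set0)%classic.
  by exists ((enorm u)^-1 *: u)^T; rewrite /S /= trmxK; case: (dotv_normalize M u_neq0).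
have S_bounded : bounded_set S.
  exists 1; split; first by rewrite num_real.
  move=> k k_gt1 r /= Sr; rewrite /Num.norm /= mx_normrE.
  apply: bigmax_le => [|[i j] _ /=]; first lra.
  rewrite (ord1 i); apply: le_trans (ltW k_gt1).
  rewrite -(@ler_pXn2r _ 2) ?nnegrE // expr1n real_normK ?num_real //.
  rewrite -Sr dotvvE (bigD1 j) //= mxE lerDl.
  by rewrite sumr_ge0 // => l _; exact: sqr_ge0.
have S_closed : closed S.
  have := continuous_quad_form (M := 1%:M); under eq_fun do rewrite mul1mx.
  have one_closed : closed [set x : R | x = 1]%classic by exact: closed_eq.
  by move/continuous_closedP => /(_ _ one_closed).
have [r Sr r_max] := compact_EVT_max S_neq0 (bounded_closed_compact S_bounded S_closed)
  (continuous_subspaceT (continuous_quad_form (M := M))).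
exists r^T; first by move: Sr; rewrite inE.
move=> w; have [->|w_neq0] := eqVneq w 0; first by rewrite mulmx0 !dotv0l mulr0.
have [Sw] := dotv_normalize M w_neq0.
have dotvv_gt0 : 0 < dotv w w by rewrite lt0r dotvv_eq0 w_neq0 dotvv_ge0.
move: (r_max ((enorm w)^-1 *: w)^T); rewrite inE /S /= !trmxK => /(_ Sw) le_max eqw.
by rewrite -ler_pdivrMr // -eqw.
Qed.

Lemma psd_sym_mulmx_eq0 P v : P^T = P -> (forall w, 0 <= dotv w (P *m w)) ->
  dotv v (P *m v) = 0 -> P *m v = 0.
Proof.
move=> P_sym P_psd Pvv; apply/eqP; rewrite -dotvv_eq0; apply/eqP.
apply: (quadratic_ge0_lincoef_eq0 (P_psd (P *m v))) => t.
have := P_psd (v + t *: (P *m v)).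
rewrite mulmxDr -scalemxAr !dotvDl !dotvDr !dotvZl !dotvZr Pvv.
have -> : dotv v (P *m (P *m v)) = dotv (P *m v) (P *m v).
  by rewrite dotv_mulmx P_sym.
lra.
Qed.

Lemma quad_form_le_largest_eigenvalue M LA u : M^T = M ->
  largest_eigenvalue M LA -> dotv u (M *m u) <= LA * dotv u u.
Proof.
move=> M_sym [_ LA_max].
have [->|u_neq0] := eqVneq u 0; first by rewrite mulmx0 !dotv0l mulr0.
have [v vv1 v_max] := quad_form_max M u_neq0.
set c := dotv v (M *m v) in v_max.
(* c%:M - M is positive semidefinite and its form vanishes at v. *)
have Mv : M *m v = c *: v.
  apply/eqP; rewrite eq_sym -subr_eq0 -mul_scalar_mx -mulmxBl; apply/eqP.
  apply: psd_sym_mulmx_eq0.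
  - by rewrite linearB /= tr_scalar_mx M_sym.
  - move=> w; rewrite mulmxBl mul_scalar_mx dotvBr dotvZr subr_ge0.
    exact: v_max.
  - by rewrite mulmxBl mul_scalar_mx dotvBr dotvZr vv1 mulr1 subrr.
have c_eigen : eigenvalue M c.
  apply/eigenvalueP; exists v^T.
    by rewrite -M_sym -trmx_mul Mv linearZ.
  by rewrite trmx_eq0 -dotvv_eq0 vv1 oner_eq0.
apply: le_trans (v_max u) _; rewrite ler_wpM2r ?dotvv_ge0 //.
exact: LA_max.
Qed.

Lemma sqr_enorm_mulmx_le n (A : 'M[R]_(n, p)) LA u :
  largest_eigenvalue (A^T *m A) LA -> enorm (A *m u) ^+ 2 <= LA * enorm u ^+ 2.
Proof.
move=> LA_max; rewrite !sqr_enorm dotv_mulmx mulmxA.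
by apply: quad_form_le_largest_eigenvalue; rewrite // trmx_mul trmxK.
Qed.

End Rayleigh.

Section Descent.
Variables (R : realType) (N : nat) (g : 'cV[R]_N -> R) (G : 'cV[R]_N -> 'cV[R]_N).
Hypothesis g_grad : is_gradient g G.

Lemma is_derive_along (z w : 'cV[R]_N) (t : R) :
  is_derive t 1 (fun s => g (z + s *: w)) (dotv (G (z + t *: w)) w).
Proof.
have [dg dgE] := g_grad (z + t *: w).
have shiftE : (fun s : R => s^-1 *: (g (z + (s *: 1 + t) *: w) - g (z + t *: w))) =
    (fun s : R => s^-1 *: (g (s *: w + (z + t *: w)) - g (z + t *: w))).
  by apply/funext => s; rewrite [s *: 1]mulr1 scalerDl addrCA addrA.
apply: DeriveDef.
  by rewrite /derivable /= shiftE; exact: (diff_derivable (v := w) dg).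
by rewrite /derive /= shiftE -/(derive g _ w) deriveE // dgE.
Qed.

Variable L : R.
Hypothesis G_lip : lipschitz_map G L.

Lemma descent_lemma (z w : 'cV[R]_N) :
  g (z + w) <= g z + dotv (G z) w + L / 2 * enorm w ^+ 2.
Proof.
pose c := dotv (G z) w; pose K := L / 2 * enorm w ^+ 2.
(* psi is nonincreasing on [0, 1]: by Cauchy-Schwarz and the Lipschitz bound,
   psi'(t) = <G (z + t w) - G z, w> - 2 t K <= L t ||w||^2 - 2 t K = 0. *)
pose psi := (fun t => g (z + t *: w)) - (c \*: id + K \*: id ^+ 2).
have psiE t : psi t = g (z + t *: w) - (c * t + K * t ^+ 2) by [].
have psi' (t : R) : is_derive t (1 : R) psi (dotv (G (z + t *: w)) w - (c + 2 * t * K)).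
  apply: is_deriveB; first exact: is_derive_along.
  by apply: is_derive_eq; rewrite /GRing.scale /= expr1 !mulr1 mulrC.
suff : psi 1 <= psi 0 by rewrite !psiE scale1r scale0r addr0 /c /K; lra.
apply: (@ler0_derive1_le_cc _ psi 0 1); rewrite ?in_itv /= ?ler01 ?lexx //.
- move=> t; rewrite in_itv /= => /andP [t_gt0 _].
  rewrite derive1E derive_val subr_le0.
  have cs := dotv_le_enorm (G (z + t *: w) - G z) w.
  have lip := G_lip (z + t *: w) z.
  rewrite addrAC subrr add0r (enormZ w (ltW t_gt0)) in lip.
  have := ler_wpM2r (enorm_ge0 w) lip.
  rewrite dotvBl -/c /K in cs *; nra.
- by apply: derivable_within_continuous => t _; exact: ex_derive.
Qed.

End Descent.

Lemma descent_lemma_x (R : realType) p q (g : 'cV[R]_(p + q) -> R) Gg L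
    (x x' : 'cV[R]_p) (y : 'cV[R]_q) :
  is_gradient g Gg -> lipschitz_map Gg L ->
  g (col_mx x' y) <= g (col_mx x y) + dotv (grad_x Gg x y) (x' - x)
                     + L / 2 * enorm (x' - x) ^+ 2.
Proof.
move=> g_grad Gg_lip.
have := descent_lemma g_grad Gg_lip (col_mx x y) (col_mx (x' - x) 0).
rewrite add_col_mx addr0 addrC subrK -[Gg (col_mx x y)]vsubmxK.
by rewrite !sqr_enorm !dotv_col_mx !dotv0r !addr0.
Qed.

Lemma sqr_enorm_penalty_step (R : realType) n p q (A : 'M[R]_(n, p)) (B : 'M[R]_(n, q))
    LA (x x' : 'cV[R]_p) (y : 'cV[R]_q) :
  largest_eigenvalue (A^T *m A) LA ->
  enorm (A *m x' + B *m y) ^+ 2 <= enorm (A *m x + B *m y) ^+ 2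
    + 2 * dotv (x' - x) (A^T *m (A *m x + B *m y)) + LA * enorm (x' - x) ^+ 2.
Proof.
move=> LA_max; have := sqr_enorm_mulmx_le (x' - x) LA_max.
have -> : A *m x' + B *m y = (A *m x + B *m y) + A *m (x' - x).
  by rewrite mulmxBr [RHS]addrC addrA subrK.
move: (A *m x + B *m y) (x' - x) => r d.
rewrite !sqr_enorm dotvDl !dotvDr -dotv_mulmx (dotvC (A *m d)); lra.
Qed.

Lemma aug_lag_x_step_decrease (R : realType) n p q
    (g : 'cV[R]_(p + q) -> R) Gg f h (A : 'M[R]_(n, p)) (B : 'M[R]_(n, q))
    Lg Lx beta LA (x x' : 'cV[R]_p) (y : 'cV[R]_q) (gam : 'cV[R]_n) :
  is_gradient g Gg -> lipschitz_map Gg Lg -> 0 <= beta ->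
  largest_eigenvalue (A^T *m A) LA ->
  fbar Gg f A B beta Lx x y gam x' <= fbar Gg f A B beta Lx x y gam x ->
  (Lx - Lg - beta * LA) / 2 * enorm (x' - x) ^+ 2
    <= aug_lag g f h A B beta x y gam - aug_lag g f h A B beta x' y gam.
Proof.
move=> g_grad Gg_lip beta_ge0 LA_max.
have g_step := descent_lemma_x x x' y g_grad Gg_lip.
have pen_step := ler_wpM2l beta_ge0 (sqr_enorm_penalty_step B x x' y LA_max).
rewrite /fbar /aug_lag subrr enorm0 expr0n /= mulr0 dotv0l !addr0.
rewrite !dotvDr dotvZr [dotv (x' - x) (grad_x _ _ _)]dotvC; lra.
Qed.

Theorem lemma5 (R : realType) (n p q : nat)
  (g : 'cV[R]_(p + q) -> R) (Gg : 'cV[R]_(p + q) -> 'cV[R]_(p + q))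
  (f : 'cV[R]_p -> R) (h : 'cV[R]_q -> R) (Gh : 'cV[R]_q -> 'cV[R]_q)
  (A : 'M[R]_(n, p)) (B : 'M[R]_(n, q))
  (Lg Lh Lx Ly beta LA : R)
  (x : nat -> 'cV[R]_p) (y : nat -> 'cV[R]_q) (gam : nat -> 'cV[R]_n) :
  (* (i) grad h is Lh-Lipschitz *)
  is_gradient h Gh -> lipschitz_map Gh Lh ->
  (* (ii) grad g is Lg-Lipschitz *)
  is_gradient g Gg -> lipschitz_map Gg Lg ->
  (* (iii) lower bounded and coercive in y on the feasible set *)
  (exists m : R, forall (u : 'cV[R]_p) (v : 'cV[R]_q), A *m u + B *m v = 0 ->
      m <= g (col_mx u v) + f u + h v) ->
  (forall M : R, exists r : R, forall (u : 'cV[R]_p) (v : 'cV[R]_q),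
      A *m u + B *m v = 0 -> r < enorm v -> M < g (col_mx u v) + f u + h v) ->
  (* (iv) B has full column rank and Im A is contained in Im B *)
  \rank B = q ->
  (forall u : 'cV[R]_p, exists v : 'cV[R]_q, A *m u = B *m v) ->
  (* parameters *)
  0 < Lx -> 0 < Ly -> 0 < beta ->
  largest_eigenvalue (A^T *m A) LA ->
  (* the algorithm *)
  (forall k (u : 'cV[R]_p),
      fbar Gg f A B beta Lx (x k) (y k) (gam k) (x k.+1)
      <= fbar Gg f A B beta Lx (x k) (y k) (gam k) u) ->
  (forall k (v : 'cV[R]_q),
      hbar Gg Gh A B beta Ly (x k.+1) (y k) (gam k) (y k.+1)
      <= hbar Gg Gh A B beta Ly (x k.+1) (y k) (gam k) v) ->
  (forall k, gam k.+1 = gam k + beta *: (A *m x k.+1 + B *m y k.+1)) ->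
  forall k : nat,
    aug_lag g f h A B beta (x k) (y k) (gam k)
    - aug_lag g f h A B beta (x k.+1) (y k) (gam k)
    >= (Lx - Lg - beta * LA) / 2 * (enorm (x k.+1 - x k)) ^+ 2.
Proof.
move=> _ _ g_grad Gg_lip _ _ _ _ _ _ beta_gt0 LA_max x_step _ _ k.
exact: aug_lag_x_step_decrease g_grad Gg_lip (ltW beta_gt0) LA_max (x_step k (x k)).
Qed.
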